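(* For all $\varepsilon>0$ and $\ell\in\mathbb{N}$ there is $\varepsilon_1>0$ such that for all sufficiently large $n$: if $G$ is an $n$-vertex graph and $v\in V(G)$ is contained in at least $\varepsilon n^{2\ell}$ cycles of length $2\ell+1$, then $G$ contains at least $\varepsilon_1 n^{4\ell}$ copies of $C^*_{2\ell+1}(2)$ in which $v$ plays the role of $a_0$.
   Context: $C^*_{2\ell+1}(2)$ is the graph on vertices $a_0,a_1,b_1,\dots,a_{2\ell},b_{2\ell}$ with edges $a_ia_{i+1},b_ib_{i+1},a_ib_{i+1},b_ia_{i+1}$ for $i\in[2\ell-1]$ together with $a_0a_1,a_0b_1,a_0a_{2\ell},a_0b_{2\ell}$ (the blow-up of the cycle $C_{2\ell+1}$ in which every vertex except $a_0$ is doubled). Copies are counted as injective maps of the vertices $a_1,b_1,\dots,a_{2\ell},b_{2\ell}$ into $V(G)$ (with $a_0\mapsto v$) preserving edges. *)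

From HB Require Import structures.
From mathcomp Require Import all_boot all_order all_algebra.
From mathcomp Require Import reals.
Set Implicit Arguments. Unset Strict Implicit. Unset Printing Implicit Defensive.

(* Number of closed walks v, f 0, ..., f (k-1), v of length k+1 visiting
   k+1 distinct vertices, i.e. cycles of length k+1 through v rooted at v
   together with a direction.  For k >= 2 each (k+1)-cycle through v is
   counted exactly twice, so the number of (k+1)-cycles containing v is
   (rooted_cycles G v k) / 2. *)
Definition rooted_cycles n (G : rel 'I_n) (v : 'I_n) (k : nat) : nat :=
  #|[set f : {ffun 'I_k -> 'I_n} | uniq (v :: codom f) && cycle G (v :: codom f)]|.

(* Copies of C^*_{2l+1}(2) with a_0 |-> v: injective maps f of the vertices
   a_1,b_1,...,a_{2l},b_{2l} (vertex a_{i+1} is (i,true), b_{i+1} is (i,false),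
   for i : 'I_(2l)) into V(G), avoiding v, and preserving edges. *)
Definition cstar_copies n (G : rel 'I_n) (v : 'I_n) (l : nat) : nat :=
  #|[set f : {ffun 'I_(2 * l) * bool -> 'I_n} |
      [&& injectiveb f, v \notin codom f,
          [forall i : 'I_(2 * l), forall j : 'I_(2 * l), forall x : bool,
             forall y : bool, (val j == (val i).+1) ==> G (f (i, x)) (f (j, y))]
        & [forall i : 'I_(2 * l), forall x : bool,
             ((val i == 0) || (val i == (2 * l).-1)) ==> G v (f (i, x))]]]|.

From HB Require Import structures.
From mathcomp Require Import all_boot all_order all_algebra.
From mathcomp Require Import reals.
From mathcomp Require Import zify ring lra.
Import Order.TTheory GRing.Theory Num.Theory.
Set Implicit Arguments. Unset Strict Implicit. Unset Printing Implicit Defensive.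

(* Let W be the number of closed walks v, w_1, ..., w_2l, v; it is at least
   the number 2 eps n^2l of rooted (2l+1)-cycles.  Cauchy-Schwarz applied to
   the pairs of walks that agree on the even positions, and then to the pairs
   of such pairs whose odd positions agree, yields at least W^4 / n^4l
   quadruples of walks (a, b2, b3, b) in which b2 and b3 interleave a and b.
   For such a quadruple, a_{i+1} |-> a i and b_{i+1} |-> b i is a homomorphic
   image of C*_{2l+1}(2) with a_0 |-> v, since each of its edges is an edge of
   one of the four walks.  Only O(n^(4l-1)) of these maps are not injective or
   hit v, which leaves eps1 n^4l copies. *)

Lemma sqr_sum_le_card_mul_sum_sqr (I : finType) (c : I -> nat) :
  ((\sum_i c i) ^ 2 <= #|I| * \sum_i c i ^ 2)%N.
Proof.
have sqr_sum : ((\sum_i c i) ^ 2 = \sum_i \sum_j c i * c j)%N.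
  by rewrite expnS expn1 big_distrl; apply: eq_bigr => i _; rewrite big_distrr.
have sum_sqr2 : (\sum_i \sum_(j : I) (c i ^ 2 + c j ^ 2)
                 = 2 * (#|I| * \sum_i c i ^ 2))%N.
  under eq_bigr do rewrite big_split /= sum_nat_const.
  rewrite big_split /= sum_nat_const -big_distrr /= -/#|I|; lia.
have : (2 * (\sum_i c i) ^ 2 <= \sum_i \sum_(j : I) (c i ^ 2 + c j ^ 2))%N.
  rewrite sqr_sum big_distrr; apply: leq_sum => i _.
  rewrite big_distrr; apply: leq_sum => j _; exact: nat_Cauchy.
by rewrite sum_sqr2 leq_pmul2l.
Qed.

Section FibrePairs.
Variables (X K : finType) (r : X -> K).

Definition fibre_pairs (A : {set X}) :=
  [set p : X * X | [&& p.1 \in A, p.2 \in A & r p.1 == r p.2]].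

Lemma sqr_card_le_fibre_pairs (A : {set X}) :
  (#|A| ^ 2 <= #|K| * #|fibre_pairs A|)%N.
Proof.
pose c k := #|[set x in A | r x == k]|.
have -> : #|A| = (\sum_k c k)%N.
  rewrite -sum1_card (partition_big r xpredT) //; apply: eq_bigr => k _.
  by rewrite /c -sum1_card; apply: eq_bigl => x; rewrite inE.
have -> : #|fibre_pairs A| = (\sum_k c k ^ 2)%N.
  rewrite -sum1_card (partition_big (fun p : X * X => r p.1) xpredT) //.
  apply: eq_bigr => k _; rewrite -mulnn -cardsX -sum1_card.
  apply: eq_bigl => -[x y]; rewrite !inE /=.
  by case: (x \in A); case: (y \in A); case: (eqVneq (r x) k) => [->|ne];
     rewrite ?andbF //= eq_sym; case: eqP.
exact: sqr_sum_le_card_mul_sum_sqr.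
Qed.

End FibrePairs.

Lemma card_bigcup_le (I T : finType) (P : pred I) (A : I -> {set T}) :
  (#|\bigcup_(i | P i) A i| <= \sum_(i | P i) #|A i|)%N.
Proof.
elim/big_rec2: _ => [|i k S _ IH]; first by rewrite cards0.
by apply: leq_trans (leq_card_setU _ _).1 _; rewrite leq_add2l.
Qed.

Section DegenerateMaps.
Variables (D : finType) (n : nat).

Lemma card_determined_off_le (A : {set {ffun D -> 'I_n}}) (y : D) :
  {in A &, forall F F' : {ffun D -> 'I_n}, (forall z, z != y -> F z = F' z) -> F = F'} ->
  (#|A| * n <= n ^ #|D|)%N.
Proof.
move=> determined.
pose set_at (p : {ffun D -> 'I_n} * 'I_n) :=
  [ffun z => if z == y then p.2 else p.1 z].
have set_at_inj : {in setX A [set: 'I_n] &, injective set_at}.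
  move=> [F t] [F' t']; rewrite !inE /= => /andP[FA _] /andP[F'A _] /ffunP E.
  have := E y; rewrite !ffunE eqxx /= => ->; congr pair.
  by apply: determined => // z /negbTE zy; have := E z; rewrite !ffunE zy.
have := card_in_imset set_at_inj; rewrite cardsX cardsT card_ord => <-.
by rewrite -[X in (_ <= X ^ _)%N]card_ord -card_ffun max_card.
Qed.

Definition degenerate_maps (v : 'I_n) :=
  [set F : {ffun D -> 'I_n} | ~~ injectiveb F || (v \in codom F)].

Lemma card_degenerate_maps_le (v : 'I_n) :
  (#|degenerate_maps v| * n <= (#|D| ^ 2 + #|D|) * n ^ #|D|)%N.
Proof.
pose collide (p : D * D) := [set F : {ffun D -> 'I_n} | F p.1 == F p.2].
pose hit (x : D) := [set F : {ffun D -> 'I_n} | F x == v].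
have cover : degenerate_maps v \subset
    (\bigcup_(p | p.1 != p.2) collide p) :|: \bigcup_x hit x.
  apply/subsetP => F; rewrite !inE => /orP[/injectiveP ninj | /codomP[x vx]].
    apply/orP; left; case: (pickP [pred p : D * D | (p.1 != p.2) && (F p.1 == F p.2)]).
      by move=> p /andP[pn pe]; apply/bigcupP; exists p; rewrite ?inE.
    move=> none; case: ninj => x y Fxy; apply/eqP; apply: contraFT (none (x, y)).
    by rewrite /= Fxy eqxx andbT.
  by apply/orP; right; apply/bigcupP; exists x; rewrite ?inE -?vx.
have collide_le p : p.1 != p.2 -> (#|collide p| * n <= n ^ #|D|)%N.
  move=> p_ne; apply: (card_determined_off_le (y := p.2)) => F F'.
  rewrite !inE => /eqP e /eqP e' eqF; apply/ffunP => z.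
  by case: (eqVneq z p.2) => [->|/eqF//]; rewrite -e -e'; apply: eqF.
have hit_le x : (#|hit x| * n <= n ^ #|D|)%N.
  apply: (card_determined_off_le (y := x)) => F F'.
  rewrite !inE => /eqP e /eqP e' eqF; apply/ffunP => z.
  by case: (eqVneq z x) => [->|/eqF//]; rewrite e e'.
apply: leq_trans (leq_mul (leq_trans (subset_leq_card cover)
                                    (leq_card_setU _ _).1) (leqnn n)) _.
rewrite !mulnDl; apply: leq_add.
  apply: leq_trans (leq_mul (card_bigcup_le _ _) (leqnn n)) _.
  rewrite big_distrl.
  apply: (@leq_trans (\sum_(p : D * D | p.1 != p.2) n ^ #|D|)).
    by apply: leq_sum => p; apply: collide_le.
  by rewrite sum_nat_const leq_mul2r -mulnn -card_prod max_card orbT.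
apply: leq_trans (leq_mul (card_bigcup_le _ _) (leqnn n)) _.
rewrite big_distrl; apply: (@leq_trans (\sum_(x : D) n ^ #|D|)).
  by apply: leq_sum => x _; apply: hit_le.
by rewrite sum_nat_const.
Qed.

End DegenerateMaps.

Section ClosedWalks.
Variables (n : nat) (G : rel 'I_n) (v : 'I_n).

Definition closed_walks k :=
  [set f : {ffun 'I_k -> 'I_n} | cycle G (v :: codom f)].

Lemma rooted_cycles_le_closed_walks k :
  (rooted_cycles G v k <= #|closed_walks k|)%N.
Proof. by apply/subset_leq_card/subsetP => f; rewrite !inE => /andP[]. Qed.

Hypothesis G_sym : symmetric G.

Lemma closed_walkP k (f : {ffun 'I_k -> 'I_n}) : f \in closed_walks k ->
  (forall i j : 'I_k, val j = (val i).+1 -> G (f i) (f j)) /\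
  (forall i : 'I_k, (val i == 0) || (val i == k.-1) -> G v (f i)).
Proof.
rewrite inE /= codom_ffun => /(pathP v) step.
have size_f : size (fgraph f) = k by rewrite size_tuple card_ord.
have nth_f (i : 'I_k) : nth v (fgraph f) i = f i by rewrite nth_fgraph_ord.
move: (tval (fgraph f)) size_f nth_f step => s size_s nth_f step; split.
  move=> i j ij; have := step j; rewrite size_rcons size_s ltnS ltnW // => /(_ isT).
  by rewrite ij /= !nth_rcons size_s ltn_ord -ij ltn_ord !nth_f.
move=> i; have k_gt0 : (0 < k)%N := leq_ltn_trans (leq0n _) (ltn_ord i).
case/orP=> [/eqP i0 | /eqP ik].
  have := step 0; rewrite size_rcons => /(_ isT).
  by rewrite /= nth_rcons size_s k_gt0 -i0 nth_f.
have := step k; rewrite size_rcons size_s ltnSn => /(_ isT).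
have {1}-> : k = (val i).+1 by rewrite /= ik prednK.
by rewrite /= !nth_rcons size_s ltnn eqxx ltn_ord nth_f G_sym.
Qed.

End ClosedWalks.

Section Parity.
Variable l : nat.

Lemma double_ord_lt (j : 'I_l) : (2 * j < 2 * l)%N.
Proof. by rewrite ltn_pmul2l // ltn_ord. Qed.

Lemma double_succ_ord_lt (j : 'I_l) : ((2 * j).+1 < 2 * l)%N.
Proof. have := ltn_ord j; lia. Qed.

Lemma half_ord_lt (i : 'I_(2 * l)) : (i./2 < l)%N.
Proof. have := ltn_ord i; lia. Qed.

Definition even_ord (j : 'I_l) : 'I_(2 * l) := Ordinal (double_ord_lt j).
Definition odd_ord (j : 'I_l) : 'I_(2 * l) := Ordinal (double_succ_ord_lt j).
Definition half_ord (i : 'I_(2 * l)) : 'I_l := Ordinal (half_ord_lt i).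

Lemma even_ord_half (i : 'I_(2 * l)) : ~~ odd i -> even_ord (half_ord i) = i.
Proof.
by move=> /negbTE i_even; apply: val_inj; rewrite /= mul2n -[RHS]odd_double_half i_even.
Qed.

Lemma odd_ord_half (i : 'I_(2 * l)) : odd i -> odd_ord (half_ord i) = i.
Proof.
by move=> i_odd; apply: val_inj; rewrite /= mul2n -[RHS]odd_double_half i_odd.
Qed.

Variable n : nat.

Definition even_part (f : {ffun 'I_(2 * l) -> 'I_n}) : {ffun 'I_l -> 'I_n} :=
  [ffun j => f (even_ord j)].
Definition odd_part (f : {ffun 'I_(2 * l) -> 'I_n}) : {ffun 'I_l -> 'I_n} :=
  [ffun j => f (odd_ord j)].

Lemma eq_even_part f g : even_part f = even_part g ->
  forall i : 'I_(2 * l), ~~ odd i -> f i = g i.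
Proof. by move=> /ffunP e i i_even; have := e (half_ord i); rewrite !ffunE even_ord_half. Qed.

Lemma eq_odd_part f g : odd_part f = odd_part g ->
  forall i : 'I_(2 * l), odd i -> f i = g i.
Proof. by move=> /ffunP e i i_odd; have := e (half_ord i); rewrite !ffunE odd_ord_half. Qed.

End Parity.

Section CStarHomomorphisms.
Variables (n : nat) (G : rel 'I_n) (v : 'I_n) (l : nat).

Local Notation walk := {ffun 'I_(2 * l) -> 'I_n}.
Local Notation walks := (closed_walks G v (2 * l)).

Definition cstar_homs :=
  [set F : {ffun 'I_(2 * l) * bool -> 'I_n} |
     [forall i : 'I_(2 * l), forall j : 'I_(2 * l), forall x : bool,
        forall y : bool, (val j == (val i).+1) ==> G (F (i, x)) (F (j, y))]
     && [forall i : 'I_(2 * l), forall x : bool,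
        ((val i == 0) || (val i == (2 * l).-1)) ==> G v (F (i, x))]].

Lemma card_cstar_homs_le :
  (#|cstar_homs| <= cstar_copies G v l + #|degenerate_maps ('I_(2 * l) * bool)%type v|)%N.
Proof.
apply: leq_trans (leq_card_setU _ _).1; apply/subset_leq_card/subsetP => F.
rewrite !inE => /andP[edges ends].
by case: (injectiveb F); case: (v \in codom F); rewrite /= ?edges ?ends.
Qed.

Definition odd_parts (p : walk * walk) := (odd_part p.1, odd_part p.2).

Definition walk_quadruples :=
  fibre_pairs odd_parts (fibre_pairs (@even_part l n) walks).

Lemma walk_quadrupleP a b2 b3 b : ((a, b2), (b3, b)) \in walk_quadruples ->
  [/\ [/\ a \in walks, b2 \in walks, b3 \in walks & b \in walks],
      forall i, b2 i = if odd i then b i else a i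
    & forall i, b3 i = if odd i then a i else b i].
Proof.
rewrite !inE /= => /and3P[/and3P[a_W b2_W /eqP ab2] /and3P[b3_W b_W /eqP b3b]].
case/eqP=> ab3 b2b; split=> // i; case: ifP => i_odd.
- exact: eq_odd_part b2b i i_odd.
- by apply/esym/(eq_even_part ab2); rewrite i_odd.
- exact/esym/(eq_odd_part ab3).
- by apply: (eq_even_part b3b); rewrite i_odd.
Qed.

Definition interleave (q : (walk * walk) * (walk * walk)) :
    {ffun 'I_(2 * l) * bool -> 'I_n} :=
  [ffun ix => if ix.2 then q.1.1 ix.1 else q.2.2 ix.1].

Hypothesis G_sym : symmetric G.

Lemma card_walk_quadruples_le : (#|walk_quadruples| <= #|cstar_homs|)%N.
Proof.
have interleave_inj : {in walk_quadruples &, injective interleave}.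
  move=> [[a b2] [b3 b]] [[a' b2'] [b3' b']].
  move=> /walk_quadrupleP[_ b2E b3E] /walk_quadrupleP[_ b2E' b3E'] /ffunP E.
  have aa' : a = a' by apply/ffunP => i; have := E (i, true); rewrite !ffunE.
  have bb' : b = b' by apply/ffunP => i; have := E (i, false); rewrite !ffunE.
  subst a' b'; congr ((_, _), (_, _)); apply/ffunP => i.
    by rewrite b2E b2E'.
  by rewrite b3E b3E'.
rewrite -(card_in_imset interleave_inj); apply/subset_leq_card/subsetP => F.
case/imsetP=> -[[a b2] [b3 b]] /walk_quadrupleP[[a_W b2_W b3_W b_W] b2E b3E] ->.
rewrite inE; apply/andP; split.
  apply/forallP => i; apply/forallP => j; apply/forallP => x; apply/forallP => y.
  apply/implyP => /eqP ij; rewrite !ffunE /=.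
  have := (closed_walkP G_sym a_W).1 i j ij.
  have := (closed_walkP G_sym b_W).1 i j ij.
  have := (closed_walkP G_sym b2_W).1 i j ij.
  have := (closed_walkP G_sym b3_W).1 i j ij.
  rewrite !b2E !b3E ij /=.
  by case: (odd i); case: x; case: y => /=.
apply/forallP => i; apply/forallP => x; apply/implyP => i_end; rewrite ffunE.
by case: x; [apply: (closed_walkP G_sym a_W).2 | apply: (closed_walkP G_sym b_W).2].
Qed.

Lemma closed_walks_pow4_le :
  (#|walks| ^ 4 <= n ^ (4 * l) * #|cstar_homs|)%N.
Proof.
have pairs_le := sqr_card_le_fibre_pairs (@even_part l n) walks.
have quads_le := sqr_card_le_fibre_pairs odd_parts
  (fibre_pairs (@even_part l n) walks).
rewrite card_ffun !card_ord in pairs_le; rewrite card_prod card_ffun !card_ord in quads_le.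
rewrite (_ : 4 = 2 * 2)%N // expnM.
rewrite -(leq_exp2r _ _ (ltn0Sn 1)) expnMn in pairs_le.
apply: leq_trans pairs_le (leq_trans (leq_mul (leqnn _) quads_le) _).
rewrite mulnA; apply: leq_mul; last exact: card_walk_quadruples_le.
by rewrite -expnM -!expnD (_ : l * 2 + (l + l) = 2 * 2 * l)%N //; lia.
Qed.

Local Open Scope ring_scope.

Lemma cstar_homs_ge (R : realFieldType) (x : R) : 0 <= x ->
  x * n%:R ^+ (2 * l) <= #|walks|%:R ->
  x ^+ 4 * n%:R ^+ (4 * l) <= #|cstar_homs|%:R.
Proof.
move=> x_ge0 walks_ge; pose P : R := n%:R ^+ (2 * l).
have P_gt0 : 0 < P by rewrite exprn_gt0 // ltr0n (leq_ltn_trans _ (ltn_ord v)).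
have n4l : n%:R ^+ (4 * l) = P ^+ 2 by rewrite -exprM; congr (_ ^+ _); lia.
rewrite n4l -(ler_pM2l (exprn_gt0 2 P_gt0)).
have -> : P ^+ 2 * (x ^+ 4 * P ^+ 2) = (x * P) ^+ 4 by ring.
apply: le_trans (_ : #|walks|%:R ^+ 4 <= _).
  by rewrite ler_pXn2r // nnegrE ?ler0n // mulr_ge0 // ltW.
by rewrite -n4l -!natrX -natrM ler_nat closed_walks_pow4_le.
Qed.

End CStarHomomorphisms.

Local Open Scope ring_scope.

Theorem claim5p3 (R : realType) (eps : R) (l : nat) :
  0 < eps ->
  exists eps1 : R, 0 < eps1 /\
  exists N : nat, forall n : nat, (N <= n)%N ->
  forall (G : rel 'I_n), irreflexive G -> symmetric G ->
  forall v : 'I_n,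
    eps * n%:R ^+ (2 * l) <= (rooted_cycles G v (2 * l))%:R / 2 ->
    eps1 * n%:R ^+ (4 * l) <= (cstar_copies G v l)%:R.
Proof.
(* [C n^(4l-1)] bounds the degenerate maps; beyond [N] this is [< 8 eps^4 n^4l]. *)
move=> eps_gt0; pose C : R := ((4 * l) ^ 2 + 4 * l)%N%:R.
have eps1_gt0 : 0 < 8 * eps ^+ 4 by rewrite mulr_gt0 ?exprn_gt0.
exists (8 * eps ^+ 4); split => //.
exists (Num.Def.trunc (C / (8 * eps ^+ 4))).+1 => n n_large G _ G_sym v cycles_ge.
have C_lt : C < 8 * eps ^+ 4 * n%:R.
  by rewrite mulrC -ltr_pdivrMr // -truncn_lt_nat ?divr_ge0 ?ler0n ?ltW.
have n_gt0 : 0 < n%:R :> R by rewrite ltr0n; apply: leq_trans n_large.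
have walks_ge : 2 * eps * n%:R ^+ (2 * l) <= #|closed_walks G v (2 * l)|%:R.
  by have := rooted_cycles_le_closed_walks G v (2 * l); rewrite -(ler_nat R); lra.
have homs_ge := cstar_homs_ge G_sym (ltW (mulr_gt0 (ltr0Sn _ 1) eps_gt0)) walks_ge.
have degenerate_le :
    #|degenerate_maps ('I_(2 * l) * bool)%type v|%:R <= 8 * eps ^+ 4 * n%:R ^+ (4 * l).
  rewrite -(ler_pM2r n_gt0); apply: le_trans (_ : C * n%:R ^+ (4 * l) <= _).
    have := card_degenerate_maps_le ('I_(2 * l) * bool)%type v.
    rewrite card_prod card_ord card_bool (_ : 2 * l * 2 = 4 * l)%N; last by lia.
    by rewrite -(ler_nat R) !natrM natrX.
  by rewrite mulrAC ler_pM2r ?exprn_gt0 // ltW.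
have := card_cstar_homs_le G v l; rewrite -(ler_nat R) natrD; rewrite exprMn in homs_ge.
move: homs_ge degenerate_le.
move: (#|cstar_homs G v l|%:R) (#|degenerate_maps _ v|%:R) ((cstar_copies G v l)%:R).
move=> h d c; lra.
Qed.
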